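(* Let $\eta$ be a primitive $7$-th root of unity and let $F(x,y,z)= x^7 + y^7 + z^7 + 14(x^3 y^2 + x^2 z^3 + y^3 z^2 + xyz) + 7(x^5 y + x z^5 + y^5 z + x y^3 + x^3 z + y z^3) + 7( x y^2 z^4 + x^2 y^4 z + x^4 y z^2 + x^2 y^2 z^2)$. Let $G(x,y,z)$ be a real polynomial with $G(\eta x,\eta^2y,\eta^4z)=G(x,y,z)$, $G=1$ on the plane $x+y+z=1$, only non-negative coefficients, and $G(0,0,0)=0$. Then either $G=F$ or $\deg G\ge 10$.
   Context: The invariance condition is equivalent to: every monomial $x^ay^bz^c$ of $G$ satisfies $a+2b+4c\equiv0\pmod 7$. *)

From mathcomp Require Import all_boot all_algebra.
From mathcomp Require Import Rstruct.
From mathcomp.real_closed Require Import complex.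
From mathcomp.multinomials Require Import mpoly.

Set Implicit Arguments.
Unset Strict Implicit.
Unset Printing Implicit Defensive.

Import GRing.Theory Num.Theory.
Local Open Scope ring_scope.

Notation RR := Rdefinitions.R.

Definition pt3 (T : Type) (a b c : T) : 'I_3 -> T :=
  fun i => nth a [:: a; b; c] i.

Definition vx : {mpoly RR[3]} := 'X_(@Ordinal 3 0 isT).
Definition vy : {mpoly RR[3]} := 'X_(@Ordinal 3 1 isT).
Definition vz : {mpoly RR[3]} := 'X_(@Ordinal 3 2 isT).

Definition Fpoly : {mpoly RR[3]} :=
  vx ^+ 7 + vy ^+ 7 + vz ^+ 7
  + 14%:R * (vx ^+ 3 * vy ^+ 2 + vx ^+ 2 * vz ^+ 3 + vy ^+ 3 * vz ^+ 2 + vx * vy * vz)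
  + 7%:R * (vx ^+ 5 * vy + vx * vz ^+ 5 + vy ^+ 5 * vz + vx * vy ^+ 3 + vx ^+ 3 * vz + vy * vz ^+ 3)
  + 7%:R * (vx * vy ^+ 2 * vz ^+ 4 + vx ^+ 2 * vy ^+ 4 * vz + vx ^+ 4 * vy * vz ^+ 2
            + vx ^+ 2 * vy ^+ 2 * vz ^+ 2).

(** Total degree of a nonzero multivariate polynomial (msize p = deg p + 1). *)
Definition mdegree (n : nat) (R : nzRingType) (p : {mpoly R[n]}) : nat := (msize p).-1.

Definition eta_invariant (eta : RR[i]) (G : {mpoly RR[3]}) : Prop :=
  forall x y z : RR[i],
    (map_mpoly (@real_complex RR) G).@[pt3 (eta * x) (eta ^+ 2 * y) (eta ^+ 4 * z)]
    = (map_mpoly (@real_complex RR) G).@[pt3 x y z].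

(* Invariance under (x, y, z) |-> (eta x, eta^2 y, eta^4 z) means that every
   monomial x^a y^b z^c of G has a + 2b + 4c = 0 mod 7: substituting
   (t, t^N, t^(N^2)) with N > deg G sends distinct monomials to distinct powers
   of t, so the invariance identity can be compared coefficientwise.  In degree
   at most 9 only 31 exponents qualify, and a combination of these 31 monomials
   that vanishes at the origin and on the plane x + y + z = 1 is zero (a
   nonsingular linear system on 30 points of the plane).  F satisfies the same
   conditions as G, hence G = F. *)

From mathcomp Require Import all_boot all_algebra.
From mathcomp Require Import Rstruct.
From mathcomp.real_closed Require Import complex.
From mathcomp.multinomials Require Import mpoly.
From mathcomp Require Import zify ring lra.
Import GRing.Theory Num.Theory.

Set Implicit Arguments.
Unset Strict Implicit.
Unset Printing Implicit Defensive.

Local Open Scope ring_scope.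

Definition ix : 'I_3 := @Ordinal 3 0 isT.
Definition iy : 'I_3 := @Ordinal 3 1 isT.
Definition iz : 'I_3 := @Ordinal 3 2 isT.

Lemma eq_mnm3 (m m' : 'X_{1..3}) :
  m ix = m' ix -> m iy = m' iy -> m iz = m' iz -> m = m'.
Proof.
move=> ex ey ez; apply/mnmP => -[[|[|[|//]]] i3]; rewrite (bool_irrelevance i3 isT).
- exact: ex.
- exact: ey.
- exact: ez.
Qed.

Lemma mnm_le_mdeg n (m : 'X_{1..n}) i : (m i <= mdeg m)%N.
Proof. by rewrite mdegE (bigD1 i) //= leq_addr. Qed.

Lemma mdeg3 (m : 'X_{1..3}) : mdeg m = (m ix + m iy + m iz)%N.
Proof.
rewrite mdegE !big_ord_recl big_ord0 addn0 addnA.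
by congr (m _ + m _ + m _)%N; apply: val_inj.
Qed.

Lemma mevalX_pt3 (R : comNzRingType) (x y z : R) (m : 'X_{1..3}) :
  'X_[m].@[pt3 x y z] = x ^+ m ix * y ^+ m iy * z ^+ m iz.
Proof.
rewrite mevalX !big_ord_recl big_ord0 mulr1 mulrA.
by congr (_ ^+ m _ * _ ^+ m _ * _ ^+ m _); apply: val_inj.
Qed.

Lemma mevalE_pt3 (R : comNzRingType) (p : {mpoly R[3]}) (x y z : R) :
  p.@[pt3 x y z] = \sum_(m <- msupp p) p@_m * (x ^+ m ix * y ^+ m iy * z ^+ m iz).
Proof. by rewrite mevalE; apply: eq_bigr => m _; rewrite -mevalX_pt3 mevalX. Qed.

Lemma poly_eq0_of_horner (R : numDomainType) (q : {poly R}) :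
  (forall t, q.[t] = 0) -> q = 0.
Proof.
move=> q0; apply: (@roots_geq_poly_eq0 _ q [seq i%:R | i <- iota 0 (size q)]).
- by apply/allP => t _; rewrite /root q0.
- by rewrite map_inj_uniq ?iota_uniq // => i j /eqP; rewrite eqr_nat => /eqP.
- by rewrite size_map size_iota.
Qed.

(* The exponent of t in x^a y^b z^c under x = t, y = t^N, z = t^(N * N). *)
Definition kron3 (N : nat) (m : 'X_{1..3}) : nat := (m ix + N * m iy + N * N * m iz)%N.

Lemma kron3_inj N (m m' : 'X_{1..3}) :
  (mdeg m < N)%N -> (mdeg m' < N)%N -> kron3 N m = kron3 N m' -> m = m'.
Proof.
move=> ltm ltm'; have lt i : (m i < N)%N := leq_ltn_trans (mnm_le_mdeg m i) ltm.
have lt' i : (m' i < N)%N := leq_ltn_trans (mnm_le_mdeg m' i) ltm'.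
have horner (k : 'X_{1..3}) : kron3 N k = ((k iz * N + k iy) * N + k ix)%N.
  by rewrite /kron3; ring.
rewrite !horner => /(congr1 (edivn^~ N)); rewrite !edivn_eq // => -[+ ex].
by move=> /(congr1 (edivn^~ N)); rewrite !edivn_eq // => -[ez ey]; apply: eq_mnm3.
Qed.

Lemma kron3_coef_eq0 (R : numDomainType) N (r : seq 'X_{1..3}) (a : 'X_{1..3} -> R) :
  uniq r -> {in r, forall m, mdeg m < N}%N ->
  (forall t : R, \sum_(m <- r) a m * t ^+ kron3 N m = 0) ->
  {in r, forall m, a m = 0}.
Proof.
move=> r_uniq r_small vanish m mr.
pose q : {poly R} := \sum_(k <- r) a k *: 'X^(kron3 N k).
have q0 : q = 0.
  apply: poly_eq0_of_horner => t; rewrite -(vanish t) horner_sum.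
  by apply: eq_bigr => k _; rewrite hornerZ hornerXn.
have : q`_(kron3 N m) = a m.
  rewrite coef_sum (bigD1_seq m) //= coefZ coefXn eqxx mulr1 big1_seq ?addr0 //.
  move=> k /andP[km kr]; rewrite coefZ coefXn; case: eqP => [eq_k|]; last by rewrite mulr0.
  by move: km; rewrite (kron3_inj (r_small m mr) (r_small k kr) eq_k) eqxx.
by rewrite q0 coef0.
Qed.

Definition weight (m : 'X_{1..3}) : nat := (m ix + 2 * m iy + 4 * m iz)%N.

Lemma expr_mnm3 (R : comNzRingType) (b : R) k l (m : 'X_{1..3}) :
  b ^+ m ix * (b ^+ k) ^+ m iy * (b ^+ l) ^+ m iz = b ^+ (m ix + k * m iy + l * m iz).
Proof. by rewrite -!exprM !exprD. Qed.

Lemma eta_invariant_dvd_weight (eta : RR[i]) (G : {mpoly RR[3]}) (m : 'X_{1..3}) :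
  7.-primitive_root eta -> eta_invariant eta G -> m \in msupp G -> (7 %| weight m)%N.
Proof.
move=> eta_prim inv mG; rewrite (prim_order_dvd eta_prim).
pose N := msize G.
pose a k := real_complex RR G@_k * (eta ^+ weight k - 1).
have meval_GC x y z : (map_mpoly (real_complex RR) G).@[pt3 x y z]
    = \sum_(k <- msupp G) real_complex RR G@_k * (x ^+ k ix * y ^+ k iy * z ^+ k iz).
  rewrite mevalE_pt3 (perm_big _ (msupp_map_mpoly G (@complexI _))).
  by apply: eq_bigr => k _; rewrite mcoeff_map_mpoly.
have : a m = 0.
  apply: (kron3_coef_eq0 (N := N) (msupp_uniq G) _ _ mG) => [k /msize_mdeg_lt //|t].
  have /eqP := inv t (t ^+ N) (t ^+ (N * N)); rewrite !meval_GC -subr_eq0 => /eqP inv_t.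
  rewrite -[RHS]inv_t -sumrB; apply: eq_bigr => k _.
  rewrite /a /weight /kron3 -!expr_mnm3 !exprMn; ring.
have Gm0 : G@_m != 0 by rewrite -mcoeff_msupp.
by move/eqP; rewrite mulf_eq0 fmorph_eq0 (negPf Gm0) subr_eq0.
Qed.

Definition inv_exponents : seq (nat * nat * nat) :=
  [:: (0, 0, 0); (7, 0, 0); (0, 7, 0); (0, 0, 7);
      (5, 1, 0); (3, 2, 0); (1, 3, 0); (4, 5, 0); (2, 6, 0);
      (1, 0, 5); (3, 0, 1); (2, 0, 3); (6, 0, 2); (5, 0, 4);
      (0, 5, 1); (0, 3, 2); (0, 1, 3); (0, 2, 6); (0, 4, 5);
      (1, 1, 1); (2, 2, 2); (3, 3, 3); (1, 2, 4); (4, 1, 2); (2, 4, 1);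
      (1, 4, 3); (3, 1, 4); (4, 3, 1); (1, 6, 2); (2, 1, 6); (6, 2, 1)]%N.

Lemma mem_inv_exponents a b c :
  (a + b + c < 10)%N -> (7 %| a + 2 * b + 4 * c)%N -> (a, b, c) \in inv_exponents.
Proof.
have inv_all : all (fun a => all (fun b => all (fun c =>
    [==> a + b + c < 10, 7 %| a + 2 * b + 4 * c => (a, b, c) \in inv_exponents]%N)
    (iota 0 10)) (iota 0 10)) (iota 0 10) by vm_compute.
move=> small div7; have [mem_a mem_b mem_c] :
  [/\ a \in iota 0 10, b \in iota 0 10 & c \in iota 0 10] by rewrite !mem_iota; split; lia.
move/allP: inv_all => /(_ a mem_a) /allP /(_ b mem_b) /allP /(_ c mem_c).
by rewrite small div7.
Qed.

Definition mon (t : nat * nat * nat) : 'X_{1..3} :=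
  let: (a, b, c) := t in [multinom [tuple a; b; c]].

Definition exponents (m : 'X_{1..3}) : nat * nat * nat := (m ix, m iy, m iz).

Lemma monK : cancel mon exponents.
Proof. by case=> [[a b] c]. Qed.

Lemma exponentsK : cancel exponents mon.
Proof. by move=> m; apply: eq_mnm3. Qed.

Definition mono {R : ringType} (x y z : R) (t : nat * nat * nat) : R :=
  let: (a, b, c) := t in x ^+ a * y ^+ b * z ^+ c.

Lemma meval_mon (R : comNzRingType) (x y z : R) t :
  'X_[mon t].@[pt3 x y z] = mono x y z t.
Proof. by case: t => [[a b] c]; rewrite mevalX_pt3. Qed.

Definition inv_poly {R : nzRingType} (c : nat * nat * nat -> R) : {mpoly R[3]} :=
  \sum_(t <- inv_exponents) c t *: 'X_[mon t].

Lemma meval_inv_poly (R : comNzRingType) (c : nat * nat * nat -> R) x y z :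
  (inv_poly c).@[pt3 x y z] = \sum_(t <- inv_exponents) c t * mono x y z t.
Proof.
by rewrite /inv_poly raddf_sum /=; apply: eq_bigr => t _; rewrite mevalZ meval_mon.
Qed.

Lemma inv_polyE (R : nzRingType) (p : {mpoly R[3]}) :
  {in msupp p, forall m, exponents m \in inv_exponents} ->
  p = inv_poly (fun t => p@_(mon t)).
Proof.
move=> supp; apply/mpolyP => m; rewrite /inv_poly raddf_sum /=.
under eq_bigr => t _ do rewrite mcoeffZ mcoeffX.
have [m_inv|m_inv] := boolP (exponents m \in inv_exponents).
  rewrite (bigD1_seq (exponents m)) // exponentsK eqxx mulr1 big1_seq /= ?addr0 //.
  move=> t /andP[tm _]; case: eqP => [eq_m|]; last by rewrite mulr0.
  by move: tm; rewrite -eq_m monK eqxx.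
rewrite big1_seq => [|t /andP[_ t_inv]]; last first.
  case: eqP => [eq_m|]; last by rewrite mulr0.
  by move: m_inv; rewrite -eq_m monK t_inv.
by apply/eqP; apply: contraNT m_inv; rewrite -mcoeff_msupp => /supp.
Qed.

Lemma inv_coef_eq0 (R : realFieldType) (c : nat * nat * nat -> R) :
  (forall x y z : R, x + y + z = 1 ->
     \sum_(t <- inv_exponents) c t * mono x y z t = 0) ->
  \sum_(t <- inv_exponents) c t * mono 0 0 0 t = 0 ->
  {in inv_exponents, forall t, c t = 0}.
Proof.
(* A point with a zero coordinate only sees the monomials missing that
   variable, so the three coordinate lines of the plane are solved first; the
   twelve monomials divisible by xyz then need interior points. *)
rewrite unlock /= => plane origin.
have ? : c (0, 0, 0)%N = 0 by lra.
have [? [? [? [? [? [? ?]]]]]] :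
    c (7, 0, 0)%N = 0 /\ c (0, 7, 0)%N = 0 /\ c (5, 1, 0)%N = 0 /\ c (3, 2, 0)%N = 0 /\
    c (1, 3, 0)%N = 0 /\ c (4, 5, 0)%N = 0 /\ c (2, 6, 0)%N = 0.
  move: (plane 1 0 0) (plane 0 1 0) (plane (-1) 2 0) (plane 2 (-1) 0)
        (plane (-2) 3 0) (plane 3 (-2) 0) (plane (-3) 4 0).
  lra.
have [? [? [? [? [? ?]]]]] :
    c (0, 0, 7)%N = 0 /\ c (1, 0, 5)%N = 0 /\ c (3, 0, 1)%N = 0 /\ c (2, 0, 3)%N = 0 /\
    c (6, 0, 2)%N = 0 /\ c (5, 0, 4)%N = 0.
  move: (plane 0 0 1) (plane (-1) 0 2) (plane 2 0 (-1))
        (plane (-2) 0 3) (plane 3 0 (-2)) (plane (-3) 0 4).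
  lra.
have [? [? [? [? ?]]]] :
    c (0, 5, 1)%N = 0 /\ c (0, 3, 2)%N = 0 /\ c (0, 1, 3)%N = 0 /\ c (0, 2, 6)%N = 0 /\
    c (0, 4, 5)%N = 0.
  move: (plane 0 (-1) 2) (plane 0 2 (-1)) (plane 0 (-2) 3) (plane 0 3 (-2)) (plane 0 (-3) 4).
  lra.
have [? [? [? [? [? [? [? [? [? [? [? ?]]]]]]]]]]] :
    c (1, 1, 1)%N = 0 /\ c (2, 2, 2)%N = 0 /\ c (3, 3, 3)%N = 0 /\
    c (1, 2, 4)%N = 0 /\ c (4, 1, 2)%N = 0 /\ c (2, 4, 1)%N = 0 /\
    c (1, 4, 3)%N = 0 /\ c (3, 1, 4)%N = 0 /\ c (4, 3, 1)%N = 0 /\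
    c (1, 6, 2)%N = 0 /\ c (2, 1, 6)%N = 0 /\ c (6, 2, 1)%N = 0.
  move: (plane (-1) 1 1) (plane 1 (-1) 1) (plane 1 1 (-1)) (plane (-2) 1 2)
        (plane (-2) 2 1) (plane 1 (-2) 2) (plane 1 2 (-2)) (plane 2 (-2) 1)
        (plane 2 1 (-2)) (plane (-3) 1 3) (plane (-3) 2 2) (plane (-3) 3 1).
  lra.
move=> t; rewrite !inE.
by repeat case/orP=> [/eqP->|] //; move/eqP->.
Qed.

Lemma inv_poly_unique (R : realFieldType) (c1 c2 : nat * nat * nat -> R) :
  (forall x y z : R, x + y + z = 1 ->
     (inv_poly c1).@[pt3 x y z] = (inv_poly c2).@[pt3 x y z]) ->
  (inv_poly c1).@[pt3 0 0 0] = (inv_poly c2).@[pt3 0 0 0] ->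
  inv_poly c1 = inv_poly c2.
Proof.
move=> plane origin.
have mevalB x y z : \sum_(t <- inv_exponents) (c1 t - c2 t) * mono x y z t
    = (inv_poly c1).@[pt3 x y z] - (inv_poly c2).@[pt3 x y z].
  by rewrite !meval_inv_poly -sumrB; apply: eq_bigr => t _; rewrite mulrBl.
have c12 : {in inv_exponents, forall t, c1 t - c2 t = 0}.
  apply: (inv_coef_eq0 (c := fun t => c1 t - c2 t)).
    by move=> x y z /plane plane_xyz; rewrite mevalB plane_xyz subrr.
  by rewrite mevalB origin subrr.
by apply: eq_big_seq => t /c12 /eqP; rewrite subr_eq0 => /eqP ->.
Qed.

Definition Fcoef (t : nat * nat * nat) : RR :=
  match t with
  | (7, 0, 0)%N | (0, 7, 0)%N | (0, 0, 7)%N => 1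
  | (3, 2, 0)%N | (2, 0, 3)%N | (0, 3, 2)%N | (1, 1, 1)%N => 14%:R
  | (5, 1, 0)%N | (1, 0, 5)%N | (0, 5, 1)%N | (1, 3, 0)%N | (3, 0, 1)%N | (0, 1, 3)%N
  | (1, 2, 4)%N | (2, 4, 1)%N | (4, 1, 2)%N | (2, 2, 2)%N => 7%:R
  | _ => 0
  end.

Lemma mpolyX_mon a b c : 'X_[mon (a, b, c)] = vx ^+ a * vy ^+ b * vz ^+ c.
Proof.
rewrite !mpolyXn -!mpolyXD; congr 'X_[_].
by apply: eq_mnm3; rewrite !mnmDE !mulmnE !mnm1E /= !(mul1n, mul0n, addn0, add0n).
Qed.

Lemma Fpoly_inv_poly : Fpoly = inv_poly Fcoef.
Proof.
rewrite /inv_poly unlock /= !mpolyX_mon -!mul_mpolyC !(mpolyC0, mpolyC1, mpolyC_nat).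
by rewrite /Fpoly; ring.
Qed.

Lemma meval_Fpoly_plane x y z : x + y + z = 1 -> Fpoly.@[pt3 x y z] = 1.
Proof.
move=> plane; have -> : z = 1 - x - y by lra.
by rewrite Fpoly_inv_poly meval_inv_poly unlock /=; ring.
Qed.

Lemma meval_Fpoly0 : Fpoly.@[pt3 0 0 0] = 0.
Proof. by rewrite Fpoly_inv_poly meval_inv_poly unlock /=; ring. Qed.

Theorem lemma5p1 (eta : RR[i]) (Heta : 7.-primitive_root eta) (G : {mpoly RR[3]}) :
  eta_invariant eta G ->
  (forall x y z : RR, x + y + z = 1 -> G.@[pt3 x y z] = 1) ->
  (forall m : 'X_{1..3}, 0 <= G@_m) ->
  G.@[pt3 0 0 0] = 0 ->
  G = Fpoly \/ (10 <= mdegree G)%N.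
Proof.
move=> inv plane _ origin.
have [|small] := leqP 10 (mdegree G); [by right | left].
have sizeG : (msize G <= 10)%N by move: small; rewrite /mdegree; lia.
have suppG : {in msupp G, forall m, exponents m \in inv_exponents}.
  move=> m mG; apply: mem_inv_exponents; last exact: eta_invariant_dvd_weight Heta inv mG.
  by rewrite -mdeg3; apply: leq_trans (msize_mdeg_lt mG) sizeG.
have EG := inv_polyE suppG.
rewrite Fpoly_inv_poly {1}EG; apply: inv_poly_unique => [x y z xyz|];
  rewrite -EG -Fpoly_inv_poly.
- by rewrite plane // meval_Fpoly_plane.
- by rewrite origin meval_Fpoly0.
Qed.
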